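(* Consider the recursive network formation model with the utility function described in the context. If $$c<b_1-b_2 \quad\text{and}\quad c_0\le(1-\gamma)b_2,$$ then the resulting topology is a complete graph: starting from a single node, for every $n\ge1$, the pairwise stable network reached after the $n$-th node has entered is the complete graph on $n$ nodes, irrespective of the random order in which nodes are selected to move.
   Context: Networks are finite simple undirected graphs whose vertices (nodes) are self-interested agents. Parameters: benefits $b_1>b_2>b_3>b_4>\dots>0$, where $b_i$ is the benefit a node obtains from a node at distance $i$; a link cost $c$ per immediate neighbor; an intermediation fraction $\gamma$ with $0\le\gamma<1$; and a network entry factor $c_0$. Notation: $N$ is the set of nodes currently in the network, $d_j$ the degree of $j$, and $l(j,w)$ the graph distance. A node $x$ is essential for a pair $y,z$ (with $x\notin\{y,z\}$) if $x$ lies on every path joining $y$ and $z$. Write $E(y,z)$ for the set of nodes essential for $y,z$ and $e(y,z)=|E(y,z)|$. Only pairs joined by a path contribute to the sums below. Utility of node $j$ in network $g$: $$u_j(g)=-c_0\,d_{T(j)}\mathbf 1_{\{j=\mathrm{NE}\}}+d_j(b_1-c)+\sum_{w\in N,\ l(j,w)>1}b_{l(j,w)}-\sum_{w\in N,\ E(j,w)\ne\emptyset}\gamma\, b_{l(j,w)}+\sum_{y,z\in N,\ j\in E(y,z)}\frac{\gamma}{e(y,z)}\,2\,b_{l(y,z)}.$$ Here $\mathbf 1_{\{j=\mathrm{NE}\}}=1$ exactly when $j$ is a newly entering node evaluating the creation of its first link. $T(j)$ is the existing node to which $j$ forms that first link, and $d_{T(j)}$ is that node's degree before the link. The network before entry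 gives the entering node utility $0$. Pairwise stability: $g$ is pairwise stable if (a) for every link $(i,j)\in g$, $u_i(g\setminus\{(i,j)\})\le u_i(g)$ and $u_j(g\setminus\{(i,j)\})\le u_j(g)$; and (b) for every non-link $(i,j)\notin g$, if $u_i(g\cup\{(i,j)\})>u_i(g)$ then $u_j(g\cup\{(i,j)\})<u_j(g)$. Recursive model of network formation: - The process starts with a single node. - When the current network of $n-1$ nodes is pairwise stable, a new node considers entering. Its options are to stay out or to propose a link to one existing node. The link forms iff the receiving node's utility does not decrease. No existing node can link to the newcomer before it has formed this first link. - After entry, nodes are repeatedly chosen at random to move. A chosen node plays a myopic best response among three options: create a link with a non-neighbor (the link forms only if the other node's utility does not decrease, which the proposer anticipates); delete a link with a neighbor (unilaterally); or keep the status quo. It alters a link only if this strictly increases its current utility. - This continues until the network is pairwise stable; then the next node considers entering, and so on. ''The resulting topology is X'' means: for every number $n$ of nodes, every pairwise stable network reached after the $n$-th node has entered is a network of topology X on $n$ nodes, irrespective of the random choices. *)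

From HB Require Import structures.
From mathcomp Require Import all_boot all_order all_algebra.
Set Implicit Arguments. Unset Strict Implicit. Unset Printing Implicit Defensive.
Import Order.TTheory GRing.Theory Num.Theory.
Local Open Scope ring_scope.

Section Network.
Variable R : realFieldType.
(* b i = benefit from a node at distance i (i >= 1; b 0 is unused) *)
Variables (b : nat -> R) (c gamma c0 : R).

Section Graph.
Variable n : nat.
Implicit Types (g : rel 'I_n) (x y z j w : 'I_n).

Definition addE g (i k : 'I_n) : rel 'I_n :=
  [rel x y | g x y || ((x == i) && (y == k)) || ((x == k) && (y == i))].
Definition delE g (i k : 'I_n) : rel 'I_n :=
  [rel x y | g x y && ~~ (((x == i) && (y == k)) || ((x == k) && (y == i)))].

Definition deg g j : nat := #|[set w | g j w]|.

Definition walk g x y (k : nat) : bool :=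
  [exists p : k.-tuple 'I_n, path g x p && (last x p == y)].

(* graph distance l(x,y): length of a shortest path; only used when
   [connect g x y] holds (then the shortest path has < n links) *)
Definition dist g x y : nat := find (walk g x y) (iota 0 n).

(* x is essential for y,z: x differs from y,z and lies on every path
   joining y and z, i.e. there is no y-z path avoiding x *)
Definition essential g x y z : bool :=
  [&& x != y, x != z &
      ~~ connect [rel a e | [&& a != x, e != x & g a e]] y z].

Definition Ess g y z : {set 'I_n} := [set x | essential g x y z].

(* utility of node j in network g (without the entry-cost term, which only
   applies to a newcomer evaluating its first link, see [entrant_val]) *)
Definition util g j : R :=
  (deg g j)%:R * (b 1%N - c)
  + \sum_(w : 'I_n | connect g j w && (1 < dist g j w)%N) b (dist g j w)
  - \sum_(w : 'I_n | connect g j w && (Ess g j w != set0)) gamma * b (dist g j w)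
  + \sum_(y : 'I_n) \sum_(z : 'I_n | [&& (y < z)%N, connect g y z & j \in Ess g y z])
        (gamma / (#|Ess g y z|)%:R) * 2 * b (dist g y z).

Definition pairwise_stable g : Prop :=
  (forall i k, g i k -> util (delE g i k) i <= util g i /\ util (delE g i k) k <= util g k)
  /\ (forall i k, i != k -> ~~ g i k ->
        util g i < util (addE g i k) i -> util (addE g i k) k < util g k).

(* the options of node i in g that actually change the network:
   creating a link with a non-neighbour k who does not lose from it,
   or unilaterally deleting a link *)
Definition option_of g (i : 'I_n) (h : rel 'I_n) : Prop :=
  (exists k, [/\ k != i, ~~ g i k, util g k <= util (addE g i k) k & h = addE g i k])
  \/ (exists k, g i k /\ h = delE g i k).

Definition move g (h : rel 'I_n) : Prop :=
  exists i, [/\ option_of g i h, util g i < util h i &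
                forall h', option_of g i h' -> util h' i <= util h i].

Inductive run : rel 'I_n -> rel 'I_n -> Prop :=
| run_stop g : pairwise_stable g -> run g g
| run_move g h g' : ~ pairwise_stable g -> move g h -> run h g' -> run g g'.

End Graph.

(* embedding the network on n nodes into 'I_n.+1, the newcomer being
   [ord_max] (isolated) *)
Definition ext n (g : rel 'I_n) : rel 'I_n.+1 :=
  fun x y => match unlift ord_max x, unlift ord_max y with
             | Some x', Some y' => g x' y'
             | _, _ => false
             end.

Definition entered n (g : rel 'I_n) (T : 'I_n) : rel 'I_n.+1 :=
  addE (ext g) ord_max (widen_ord (leqnSn n) T).

Definition entrant_val n (g : rel 'I_n) (T : 'I_n) : R :=
  util (entered g T) ord_max - c0 * (deg g T)%:R.

Definition accepts n (g : rel 'I_n) (T : 'I_n) : Prop :=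
  util g T <= util (entered g T) (widen_ord (leqnSn n) T).

(* the newcomer enters by linking to T: T accepts, the newcomer's choice is
   a best response among accepted links, and strictly better than staying
   out (utility 0) *)
Definition entry_ok n (g : rel 'I_n) (T : 'I_n) : Prop :=
  [/\ accepts g T, 0 < entrant_val g T &
      forall T', accepts g T' -> entrant_val g T' <= entrant_val g T].

(* reached n g : g is a pairwise stable network reached after the n-th node
   has entered, for some realisation of the random choices *)
Inductive reached : forall n, rel 'I_n -> Prop :=
| reached1 : reached [rel x y : 'I_1 | false]
| reachedS n (g : rel 'I_n) (T : 'I_n) (h : rel 'I_n.+1) :
    reached g -> entry_ok g T -> run (entered g T) h -> reached h.

End Network.

From HB Require Import structures.
From mathcomp Require Import all_boot all_order all_algebra.
From mathcomp Require Import zify lra.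
From Stdlib Require Import FunctionalExtensionality.
Import Order.TTheory GRing.Theory Num.Theory.
Set Implicit Arguments. Unset Strict Implicit. Unset Printing Implicit Defensive.

(* The heart of the argument is that, when c < b_1 - b_2, deleting any of
   its links strictly lowers a node's utility ([util_del]): the node loses
   the direct benefit b_1 - c of that link, while the former neighbour is
   still at distance >= 2 (worth at most b_2 more than before), the
   benefits from all other nodes can only decrease (distances grow and
   more nodes become essential), and the intermediation rents of the node
   can only shrink (it becomes essential for the same pairs, which are
   further apart and have more essential nodes).
   Consequently, in any pairwise stable simple graph, a missing link would
   be strictly profitable for both endpoints, so the graph is complete
   ([complete_of_stable]).  Since entry and the moves of the dynamics keep
   the network a simple graph, every network reached after an entry phase
   is simple and pairwise stable, hence complete. *)

Lemma ord_small n (x y : 'I_n) : (n <= 1)%N -> x = y.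
Proof. by move=> n1; apply: ord_inj; have := ltn_ord x; have := ltn_ord y; lia. Qed.

Section Distances.
Variable n : nat.
Implicit Types (G H : rel 'I_n) (x y z : 'I_n).

Lemma walk0 G x y : walk G x y 0 = (x == y).
Proof.
apply/existsP/idP => [[p /andP[_ /eqP <-]]|/eqP <-]; first by rewrite (tuple0 p).
by exists [tuple]; rewrite /= eqxx.
Qed.

Lemma walk1 G x y : walk G x y 1 = G x y.
Proof.
apply/existsP/idP => [[[[|z [|? ?]] //= _]]|Gxy].
  by rewrite andbT => /andP[? /eqP <-].
by exists [tuple y]; rewrite /= Gxy eqxx.
Qed.

Lemma walk_sub G H x y k :
  subrel H G -> walk H x y k -> walk G x y k.
Proof.
move=> HG /existsP[p /andP[hp hl]]; apply/existsP; exists p.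
by rewrite hl andbT; apply: sub_path hp.
Qed.

Lemma dist_le G x y k : (k < n)%N -> walk G x y k -> (dist G x y <= k)%N.
Proof.
move=> kn hw; rewrite leqNgt; apply/negP => lt.
by have := before_find 0%N lt; rewrite nth_iota // add0n hw.
Qed.

Lemma dist_size G x y : (dist G x y <= n)%N.
Proof. by have := find_size (walk G x y) (iota 0 n); rewrite size_iota. Qed.

Lemma dist_walk G x y : (dist G x y < n)%N -> walk G x y (dist G x y).
Proof.
move=> lt; have hs : has (walk G x y) (iota 0 n) by rewrite has_find size_iota.
by have := nth_find 0%N hs; rewrite nth_iota ?add0n // -(size_iota 0 n) -has_find.
Qed.

Lemma dist_pos G x y : x != y -> (0 < dist G x y)%N.
Proof.
move=> nxy; rewrite lt0n; apply/eqP => d0.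
have n0 : (0 < n)%N by have := ltn_ord x; lia.
by have := @dist_walk G x y; rewrite d0 walk0 (negbTE nxy) => /(_ n0).
Qed.

(* a node essential for y, z separates them, so y and z are not adjacent *)
Lemma ess_dist G y z : Ess G y z != set0 -> (1 < dist G y z)%N.
Proof.
case/set0Pn => x; rewrite inE => /and3P[xy xz /negP nc].
rewrite ltnNge; apply/negP => d1.
case: (ltnP (dist G y z) n) => dn; last by apply: nc; rewrite (@ord_small n y z) ?connect0 //; lia.
have := dist_walk dn; move: d1; rewrite leq_eqVlt ltnS leqn0 => /orP[] /eqP ->.
  rewrite walk1 => Gyz; apply: nc; apply: connect1.
  by rewrite /= Gyz eq_sym xy eq_sym xz.
by rewrite walk0 => /eqP yz; apply: nc; rewrite yz connect0.
Qed.

End Distances.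

Section LinkDeletion.
Variable n : nat.
Implicit Types (g : rel 'I_n) (i k w x y z : 'I_n).

Lemma del_sub g i k : subrel (delE g i k) g.
Proof. by move=> a e /andP[]. Qed.

Lemma del_keep g i k w : w != k -> g i w -> delE g i k i w.
Proof.
move=> wk giw; rewrite /delE /= giw eqxx (negbTE wk) /=.
by apply/negP => /andP[/eqP ik /eqP wi]; move/negP: wk; apply; rewrite wi ik.
Qed.

Lemma conn_del g i k x y : connect (delE g i k) x y -> connect g x y.
Proof. by apply: connect_sub => a e /del_sub ge; apply: connect1. Qed.

Lemma dist_del g i k x y : (dist g x y <= dist (delE g i k) x y)%N.
Proof.
case: (ltnP (dist (delE g i k) x y) n) => dn; last exact: leq_trans (dist_size _ _ _) dn.
by apply: dist_le => //; apply: walk_sub (dist_walk dn); apply: del_sub.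
Qed.

(* paths avoiding a node in the smaller graph avoid it in the larger one *)
Lemma ess_del g i k y z : Ess g y z \subset Ess (delE g i k) y z.
Proof.
apply/subsetP => x; rewrite !inE /essential => /and3P[-> -> nc] /=; apply: contra nc.
apply: connect_sub => a e /= /and3P[ax ex /del_sub ge].
by apply: connect1; rewrite /= ax ex ge.
Qed.

(* paths avoiding i never use a link of i, so i's essentiality is unchanged *)
Lemma ess_del_i g i k y z : (i \in Ess (delE g i k) y z) = (i \in Ess g y z).
Proof.
rewrite !inE /essential; congr [&& _, _ & ~~ _]; apply: eq_connect => a e /=.
rewrite /delE /=; case: (eqVneq a i) => //= ai; case: (eqVneq e i) => //= ei.
by rewrite andbF /= andbT.
Qed.

Lemma dist_del_small g i k w : w != k ->
  (dist g i w <= 1)%N -> (dist (delE g i k) i w <= 1)%N.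
Proof.
move=> wk d1; case: (ltnP (dist g i w) n) => dn; last first.
  by move/negP: wk; case; apply/eqP; apply: ord_small; lia.
have := dist_walk dn; move: d1; rewrite leq_eqVlt ltnS leqn0 => /orP[] /eqP e; rewrite e.
  by rewrite walk1 => giw; apply: dist_le; [rewrite -e | rewrite walk1 del_keep].
rewrite walk0 => /eqP iw; apply: leq_trans (_ : 0 <= 1)%N => //.
by apply: dist_le; [rewrite -e | rewrite walk0 iw].
Qed.

Lemma deg_del g i k : g i k -> deg g i = (deg (delE g i k) i).+1.
Proof.
move=> gik; rewrite /deg.
have -> : [set w | g i w] = k |: [set w | delE g i k i w].
  apply/setP => w; rewrite !inE; case: (eqVneq w k) => [->|wk] /=; first by rewrite gik.
  by case giw: (g i w); [rewrite del_keep | rewrite /delE /= giw].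
by rewrite cardsU1 inE /delE /= !eqxx andbF add1n.
Qed.

Lemma del_add g i k : ~~ g i k -> ~~ g k i ->
  delE (addE g i k) i k = g /\ delE (addE g i k) k i = g.
Proof.
move=> n1 n2; split; apply: functional_extensionality => x;
  apply: functional_extensionality => y; rewrite /delE /addE /=.
all: case e1: ((x == i) && (y == k));
  [ case/andP: e1 => /eqP -> /eqP ->; rewrite (negbTE n1) ?eqxx;
    by case: (i == k); case: (k == i) | ].
all: case e2: ((x == k) && (y == i));
  [ case/andP: e2 => /eqP -> /eqP ->; rewrite (negbTE n2) ?eqxx;
    by case: (i == k); case: (k == i) | ].
all: by rewrite ?orbF ?andbT.
Qed.

End LinkDeletion.
Local Open Scope ring_scope.

Section Utility.
Variables (R : realFieldType) (b : nat -> R) (c gamma : R).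
Hypothesis hb_pos : forall i : nat, (0 < i)%N -> 0 < b i.
Hypothesis hb_dec : forall i : nat, (0 < i)%N -> b i.+1 < b i.
Hypothesis hg0 : 0 <= gamma.
Hypothesis hg1 : gamma < 1.

Definition intermediary_loss n (G : rel 'I_n) j w : R :=
  if connect G j w && (Ess G j w != set0) then gamma * b (dist G j w) else 0.

Definition indirect_benefit n (G : rel 'I_n) j w : R :=
  (if connect G j w && (1 < dist G j w)%N then b (dist G j w) else 0)
  - intermediary_loss G j w.

Definition rents n (G : rel 'I_n) j : R :=
  \sum_(y : 'I_n) \sum_(z : 'I_n | [&& (y < z)%N, connect G y z & j \in Ess G y z])
        (gamma / (#|Ess G y z|)%:R) * 2 * b (dist G y z).

Lemma util_split n (G : rel 'I_n) j : util b c gamma G j =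
  (deg G j)%:R * (b 1%N - c) + \sum_w indirect_benefit G j w + rents G j.
Proof.
rewrite /util /rents /indirect_benefit /intermediary_loss sumrB -!big_mkcond /=.
by rewrite addrA.
Qed.

Lemma b_mono p q : (0 < p)%N -> (p <= q)%N -> b q <= b p.
Proof.
move=> p0; elim: q => [|q IH]; first by rewrite leqn0 => /eqP p0'; rewrite p0' in p0.
rewrite leq_eqVlt => /orP[/eqP -> //|]; rewrite ltnS => pq.
by apply: le_trans (IH pq); apply/ltW/hb_dec; apply: leq_trans pq.
Qed.

(* the share lost to intermediaries is nonnegative (essential nodes only
   exist at distance >= 2) *)
Lemma loss_ge0 n (G : rel 'I_n) j w : 0 <= intermediary_loss G j w.
Proof.
rewrite /intermediary_loss; case: ifP => // /andP[_ /ess_dist d1].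
by rewrite mulr_ge0 // ltW // hb_pos // ltnW.
Qed.

Lemma indirect_benefit_ge0 n (G : rel 'I_n) j w : 0 <= indirect_benefit G j w.
Proof.
rewrite /indirect_benefit /intermediary_loss; case: (boolP (Ess G j w != set0)) => e.
  have d1 := ess_dist e; rewrite d1 !andbT; case: (connect _ _ _); first last.
    by rewrite subrr.
  by rewrite subr_ge0 ler_piMl // ltW // hb_pos // ltnW.
by rewrite andbF subr0; case: ifP => // /andP[_ d]; apply/ltW/hb_pos/ltnW.
Qed.

Lemma indirect_benefit_le_b2 n (G : rel 'I_n) j w : indirect_benefit G j w <= b 2%N.
Proof.
rewrite /indirect_benefit lerBlDr.
apply: le_trans (_ : b 2%N <= _); last by rewrite lerDl loss_ge0.
case: ifP => [/andP[_ d]|_]; [exact: b_mono | exact/ltW/hb_pos].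
Qed.

Lemma indirect_benefit_del n (g : rel 'I_n) i k w : w != k ->
  indirect_benefit (delE g i k) i w <= indirect_benefit g i w.
Proof.
move=> wk; set H := delE g i k.
case: (boolP (connect H i w && (1 < dist H i w)%N)) => [/andP[cH dH]|hcH]; last first.
  apply: le_trans (indirect_benefit_ge0 g i w).
  by rewrite /indirect_benefit (negbTE hcH) sub0r oppr_le0 loss_ge0.
have cG := conn_del cH.
have dG : (1 < dist g i w)%N.
  by rewrite ltnNge; apply/negP => /(dist_del_small wk); rewrite leqNgt dH.
have ble : b (dist H i w) <= b (dist g i w) by apply: b_mono (dist_del _ _ _ _ _); apply: ltnW.
have lH := loss_ge0 H i w.
rewrite /indirect_benefit /intermediary_loss cH dH cG dG /= in lH *.
case: (boolP (Ess g i w != set0)) => eG; last by lra.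
have eH : Ess H i w != set0.
  by case/set0Pn: eG => x xE; apply/set0Pn; exists x; apply: subsetP (ess_del _ _ _ _ _) x xE.
rewrite eH -[X in X - _]mul1r -[X in _ <= X - _]mul1r -!mulrBl.
by apply: ler_wpM2l => //; rewrite subr_ge0 ltW.
Qed.

(* deleting a link of i does not increase its intermediation rents: i stays
   essential for the same pairs, which are further apart and have at least
   as many essential nodes *)
Lemma rents_del n (g : rel 'I_n) i k : rents (delE g i k) i <= rents g i.
Proof.
apply: ler_sum => y _; rewrite [X in X <= _]big_mkcond [X in _ <= X]big_mkcond /=.
apply: ler_sum => z _.
have rent_ge0 (G : rel 'I_n) : (y < z)%N ->
    0 <= gamma / (#|Ess G y z|)%:R * 2 * b (dist G y z).
  move=> yz; rewrite !mulr_ge0 // ?invr_ge0 ?ler0n // ltW // hb_pos // dist_pos //.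
  by rewrite neq_ltn yz.
case: ifP => [/and3P[yz cH eH]|_]; last by case: ifP => // /and3P[yz _ _]; apply: rent_ge0.
have eG : i \in Ess g y z by rewrite -(ess_del_i g i k).
rewrite yz (conn_del cH) eG /=.
have dG : (0 < dist g y z)%N by apply: dist_pos; rewrite neq_ltn yz.
have cardG : (0 < #|Ess g y z|)%N by apply/card_gt0P; exists i.
have cardle : (#|Ess g y z| <= #|Ess (delE g i k) y z|)%N.
  by apply: subset_leq_card; apply: ess_del.
apply: ler_pM.
- by rewrite !mulr_ge0 // invr_ge0 ler0n.
- by apply/ltW/hb_pos; apply: leq_trans dG (dist_del _ _ _ _ _).
- apply: ler_wpM2r => //; apply: ler_wpM2l => //.
  by rewrite lef_pV2 ?posrE ?ltr0n ?ler_nat //; apply: leq_trans cardle.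
- by apply: b_mono => //; apply: dist_del.
Qed.

Hypothesis hc : c < b 1%N - b 2%N.

Lemma util_del n (g : rel 'I_n) i k : g i k ->
  util b c gamma (delE g i k) i < util b c gamma g i.
Proof.
move=> gik; rewrite !util_split (deg_del gik) -[(deg _ i).+1]addn1 natrD mulrDl mul1r.
have hF : \sum_w indirect_benefit (delE g i k) i w
          <= b 2%N + \sum_w indirect_benefit g i w.
  rewrite (bigD1 k) //= [X in _ <= _ + X](bigD1 k) //= addrA.
  apply: lerD; first by rewrite -[X in X <= _]addr0; apply: lerD;
    [apply: indirect_benefit_le_b2 | apply: indirect_benefit_ge0].
  by apply: ler_sum => w wk; apply: indirect_benefit_del.
have hR := rents_del g i k.
have hb2 : b 2%N < b 1%N - c by rewrite ltrBrDl -ltrBrDr.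
lra.
Qed.

End Utility.

Definition simple_graph n (g : rel 'I_n) : Prop := irreflexive g /\ symmetric g.

Lemma link_sym n (i k x y : 'I_n) :
  ((x == i) && (y == k)) || ((x == k) && (y == i))
  = ((y == i) && (x == k)) || ((y == k) && (x == i)).
Proof. by rewrite orbC !(andbC (x == _)). Qed.

Lemma simple_add n (g : rel 'I_n) i k :
  i != k -> simple_graph g -> simple_graph (addE g i k).
Proof.
move=> ik [irr sym]; split=> [x|x y]; rewrite /addE /=.
  by rewrite irr; case: (eqVneq x i) => [->|] /=; rewrite ?eqxx ?(negbTE ik) ?andbF.
by rewrite -!orbA sym link_sym.
Qed.

Lemma simple_del n (g : rel 'I_n) i k : simple_graph g -> simple_graph (delE g i k).
Proof.
move=> [irr sym]; split=> [x|x y]; rewrite /delE /= ?irr //.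
by rewrite sym link_sym.
Qed.

(* the newcomer's first link goes to an existing, hence different, node *)
Lemma simple_entered n (g : rel 'I_n) T : simple_graph g -> simple_graph (entered g T).
Proof.
move=> [irr sym]; apply: simple_add.
  by rewrite eq_sym -val_eqE /= neq_ltn ltn_ord.
split=> [x|x y]; rewrite /ext.
  by case: (unlift _ x) => // x'; apply: irr.
by case: (unlift _ x) => [x'|]; case: (unlift _ y) => [y'|] //; apply: sym.
Qed.

Section Dynamics.
Variables (R : realFieldType) (b : nat -> R) (c gamma c0 : R).
Hypothesis hb_pos : forall i : nat, (0 < i)%N -> 0 < b i.
Hypothesis hb_dec : forall i : nat, (0 < i)%N -> b i.+1 < b i.
Hypothesis hg0 : 0 <= gamma.
Hypothesis hg1 : gamma < 1.
Hypothesis hc : c < b 1%N - b 2%N.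

(* a missing link in a simple graph is strictly profitable for both of its
   endpoints, so a pairwise stable simple graph is complete *)
Lemma complete_of_stable n (g : rel 'I_n) :
  simple_graph g -> pairwise_stable b c gamma g -> forall x y, g x y = (x != y).
Proof.
move=> [irr sym] [_ st] x y; case: (eqVneq x y) => [->|xy]; first exact: irr.
case: (boolP (g x y)) => // ngxy; have ngyx : ~~ g y x by rewrite sym.
have [dxy dyx] := del_add ngxy ngyx.
have hxy : addE g x y x y by rewrite /addE /= !eqxx orbT.
have hyx : addE g x y y x by rewrite /addE /= !eqxx orbT.
have ux := util_del hb_pos hb_dec hg0 hg1 hc hxy; rewrite dxy in ux.
have uy := util_del hb_pos hb_dec hg0 hg1 hc hyx; rewrite dyx in uy.
by have := lt_trans uy (st x y xy ngxy ux); rewrite ltxx.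
Qed.

Lemma run_simple_stable n (g h : rel 'I_n) : run b c gamma g h ->
  simple_graph g -> simple_graph h /\ pairwise_stable b c gamma h.
Proof.
elim=> {g h} [g st sg|g h g' _ [i [opt _ _]] _ IH sg]; first by [].
apply: IH; case: opt => [[k [ki _ _ ->]]|[k [_ ->]]].
  by apply: simple_add; rewrite // eq_sym.
exact: simple_del.
Qed.

Lemma reached_simple_stable n (g : rel 'I_n) : reached b c gamma c0 g ->
  simple_graph g /\ pairwise_stable b c gamma g.
Proof.
elim=> {n g} [|n g T h _ [sg _] _ hrun].
  split; first by split.
  by split=> [//|i k]; rewrite (@ord_small 1 i k) ?eqxx.
exact: run_simple_stable hrun (simple_entered T sg).
Qed.

End Dynamics.

Theorem theorem2 (R : realFieldType) (b : nat -> R) (c gamma c0 : R)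
  (hb_pos : forall i : nat, (0 < i)%N -> 0 < b i)
  (hb_dec : forall i : nat, (0 < i)%N -> b i.+1 < b i)
  (hg0 : 0 <= gamma) (hg1 : gamma < 1)
  (hc : c < b 1%N - b 2%N) (hc0 : c0 <= (1 - gamma) * b 2%N) :
  forall (n : nat) (g : rel 'I_n), reached b c gamma c0 g ->
    forall x y : 'I_n, g x y = (x != y).
Proof.
move=> n g /reached_simple_stable [sg st].
exact: (complete_of_stable hb_pos hb_dec hg0 hg1 hc sg st).
Qed.
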